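(* Let $\mathcal{C}^1, \mathcal{C}^2 \subset \mathbb{R}^l$, $p^1 \neq p^2$, and the growth distance algorithm be as described in the context, producing lower bounds $\beta^l_k > 0$ and upper bounds $\beta^u_k \in (0, \infty]$ on the ray intersection value. Then the relative gap $\beta^u_k/\beta^l_k - 1$ is monotonically decreasing (non-increasing) in $k$ over the iterations executed by the algorithm.
   Context: A proper convex (PC) set is a compact convex subset of $\mathbb{R}^l$ with nonempty interior. For compact convex $\mathcal{C}$: $B_r(x)$ is the closed Euclidean ball; inradius $r(\mathcal{C}, x) = \max\{r \ge 0 : B_r(x) \subset \mathcal{C}\}$; support function $s_v[\mathcal{C}](\lambda) = \max_{z \in \mathcal{C}} \langle \lambda, z\rangle$; support point function $s_p[\mathcal{C}](\lambda)$ is any (arbitrary) selection from $\arg\max_{z \in \mathcal{C}}\langle \lambda, z\rangle$. Setting: $\mathcal{C}^1$ is a PC set, $\mathcal{C}^2 \ne \emptyset$ compact convex, $p^1 \in \operatorname{int}\mathcal{C}^1$, $p^2 \in \mathcal{C}^2$, $p^1 \ne p^2$, $\underline r = r(\mathcal{C}^1,p^1) + r(\mathcal{C}^2,p^2)$. Let $p = p^2 - p^1$ and $\mathcal{C} = \mathcal{C}^1 - \mathcal{C}^2 + \{p\}$, so $B_{\underline r}(0) \subset \mathcal{C}$; $s_v[\mathcal{C}](\lambda) = s_v[\mathcal{C}^1](\lambda) + s_v[\mathcal{C}^2](-\lambda) + \langle\lambda, p\rangle$, $s_p[\mathcal{C}](\lambda) = s_p[\mathcal{C}^1](\lambda) -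 s_p[\mathcal{C}^2](-\lambda) + p$. The ray intersection problem is: maximize $\beta$ subject to $z \in \mathcal{C}$, $z = \beta p$. Algorithm. Initialization ($k=0$): $M^o_0 = \emptyset$, $\beta^u_0 = \infty$; $M^i_0 = \{-l+1,\dots,0\}$; choose $l-1$ linearly independent unit vectors $p^\perp_m$ orthogonal to $p$ and set $z_m = K p^\perp_m + \epsilon p/\|p\|$ ($m=-l+1,\dots,-1$), $z_0 = l\epsilon p/\|p\| - \sum_{m=-l+1}^{-1} z_m$, with $\epsilon, K > 0$ such that $\|z_m\| \le \underline r$; $M^{i*}_0 = M^i_0$, $\beta^l_0 = \epsilon/\|p\|$, $\lambda_0 = p/\|p\|_\infty$. Iteration $k \ge 1$: $z_k = s_p[\mathcal{C}](\lambda_{k-1})$, $v_k = s_v[\mathcal{C}](\lambda_{k-1})$. Outer update: $M^o_k = \{m^*\}$ with $m^* \in \arg\min_{m \in M^o_{k-1}\cup\{k\}} v_m/\langle\lambda_{m-1},p\rangle$, and $\beta^u_k = \min\{\beta^u_{k-1}, v_k/\langle\lambda_{k-1},p\rangle\}$. Inner update: $M^i_k = M^i_{k-1}\cup\{k\}$; solve the LP $\min \sum_{m\in M^i_k}\nu_m$ s.t. $\sum_{m\in M^i_k}\nu_m z_m = p$, $\nu \ge 0$ by the primal Simplex method started from basis $M^{i*}_{k-1}$ (most-negative reduced cost entering rule, minimum-ratio leaving rule, Bland's anti-cycling rule), obtaining optimal basis $M^{i*}_k$ and optimal value $(\beta^l_k)^{-1}$; optionally prune $M^i_k$ to any subset containing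 $M^{i*}_k$; set $\lambda_k = Z^{-\top}\mathbf{1}$ with $Z = [z_{m_1}\cdots z_{m_l}]$, $\{m_1,\dots,m_l\} = M^{i*}_k$, then $\lambda_k \leftarrow \lambda_k/\|\lambda_k\|_\infty$. Stop when $\beta^u_k/\beta^l_k - 1 < \epsilon_{tol}$ or $k = K_{max}$. *)

From mathcomp Require Import all_boot all_order all_algebra.
From mathcomp Require Import all_classical all_reals all_analysis.
Import Order.TTheory GRing.Theory Num.Theory.
Import numFieldTopology.Exports numFieldNormedType.Exports.

Set Implicit Arguments.
Unset Strict Implicit.
Unset Printing Implicit Defensive.

Local Open Scope classical_set_scope.
Local Open Scope ring_scope.

Section GrowthDistance.
Variables (R : realType) (l : nat).
Notation vec := 'cV[R]_l.

Definition dot (u v : vec) : R := \sum_(i < l) u i 0 * v i 0.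
Definition enorm (u : vec) : R := Num.sqrt (dot u u).
Definition infnorm (u : vec) : R := \big[Num.max/0]_(i < l) `|u i 0|.

Definition cball (x : vec) (r : R) : set vec := [set y | enorm (y - x) <= r].

Definition compact_convex (C : set vec) : Prop :=
  compact C /\ @convex_set R vec C.

Definition PC_set (C : set vec) : Prop :=
  compact_convex C /\ (interior C !=set0).

Definition is_inradius (C : set vec) (x : vec) (r : R) : Prop :=
  0 <= r /\ cball x r `<=` C /\
  (forall r', 0 <= r' -> cball x r' `<=` C -> r' <= r).

Definition supp_val (C : set vec) (lam : vec) : R := sup [set dot lam z | z in C].

Definition is_supp_point (C : set vec) (lam : vec) (z : vec) : Prop :=
  C z /\ (forall y, C y -> dot lam y <= dot lam z).

Definition supp_point_fun (C : set vec) (sp : vec -> vec) : Prop :=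
  forall lam, is_supp_point C lam (sp lam).

Definition minkowski_C (C1 C2 : set vec) (p : vec) : set vec :=
  [set x | exists a b, C1 a /\ C2 b /\ x = a - b + p].

Definition init_idx : seq int := [seq (n%:Z - l%:Z + 1) | n <- iota 0 l].
Definition perp_idx : seq int := [seq (n%:Z - l%:Z + 1) | n <- iota 0 l.-1].

(* matrix Z = [z_{m_1} ... z_{m_l}] of a basis given as b : 'I_l -> int *)
Definition basis_mx (z : int -> vec) (b : 'I_l -> int) : 'M[R]_l :=
  \matrix_(i < l, j < l) z (b j) i 0.

Definition dual_vec (z : int -> vec) (b : 'I_l -> int) : vec :=
  let lam := invmx (basis_mx z b)^T *m const_mx 1 in (infnorm lam)^-1 *: lam.

(* M* is an optimal basis of  min sum_{m in S} nu_m  s.t.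
   sum_{m in S} nu_m z_m = p, nu >= 0, with optimal value v. *)
Definition optimal_basis (z : int -> vec) (p : vec) (S : pred int)
    (b : 'I_l -> int) (v : R) : Prop :=
  injective b /\ (forall j, S (b j)) /\
  basis_mx z b \in unitmx /\
  (let nuB := invmx (basis_mx z b) *m p in
   (forall j, 0 <= nuB j 0) /\
   v = \sum_(j < l) nuB j 0 /\
   (forall (s : seq int) (nu : int -> R),
       uniq s -> all S s -> (forall m, m \in s -> 0 <= nu m) ->
       \sum_(m <- s) nu m *: z m = p ->
       v <= \sum_(m <- s) nu m)).

(* Data: points z_m (m : int), dual vectors lam_k, support values v_k,
   outer sets M^o_k (None = empty, Some m = {m}), inner sets M^i_k,
   optimal bases M^{i*}_k, bounds beta^l_k (real) and beta^u_k (extended). *)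
Definition GD_run (C1 C2 : set vec) (p1 p2 : vec) (rl : R)
    (sp1 sp2 : vec -> vec) (eps K : R) (pperp : int -> vec) (N : nat)
    (z : int -> vec) (lam : nat -> vec) (v : nat -> R)
    (Mo : nat -> option nat) (Mi : nat -> pred int) (Mstar : nat -> 'I_l -> int)
    (betal : nat -> R) (betau : nat -> \bar R) : Prop :=
  let p := p2 - p1 in
  let ratio := fun m : nat => v m / dot (lam m.-1) p in
  (Mo 0 = None /\ betau 0 = +oo%E /\
      Mi 0 =i (fun m => m \in init_idx) /\
      (forall m, m \in perp_idx -> enorm (pperp m) = 1 /\ dot (pperp m) p = 0) /\
      (forall c : int -> R, \sum_(m <- perp_idx) c m *: pperp m = 0 ->
          forall m, m \in perp_idx -> c m = 0) /\
      0 < eps /\ 0 < K /\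
      (forall m, m \in perp_idx -> z m = K *: pperp m + (eps / enorm p) *: p) /\
      z 0 = (l%:R * eps / enorm p) *: p - \sum_(m <- perp_idx) z m /\
      (forall m, m \in init_idx -> enorm (z m) <= rl) /\
      (forall j : 'I_l, Mstar 0 j = init_idx`_j) /\
      betal 0 = eps / enorm p /\
      lam 0 = (infnorm p)^-1 *: p)
  /\
  (forall k : nat, (1 <= k <= N)%N ->
    let lamk := lam k.-1 in
    (z k%:Z = sp1 lamk - sp2 (- lamk) + p /\
        v k = supp_val (minkowski_C C1 C2 p) lamk /\
        (exists ms, [/\ Mo k = Some ms,
                       ms = k \/ Mo k.-1 = Some ms,
                       ratio ms <= ratio k &
                       forall m', Mo k.-1 = Some m' -> ratio ms <= ratio m']) /\
        betau k = Order.min (betau k.-1) (ratio k)%:E /\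
        optimal_basis z p (predU (Mi k.-1) (pred1 k%:Z)) (Mstar k) (betal k)^-1 /\
        (* optional pruning: M^{i*}_k subset M^i_k subset M^i_{k-1} u {k} *)
        (forall j, Mi k (Mstar k j)) /\
        (forall m, Mi k m -> Mi k.-1 m \/ m = k%:Z) /\
        lam k = dual_vec z (Mstar k))).

End GrowthDistance.

Definition rel_gap (R : realType) (bu : \bar R) (bl : R) : \bar R :=
  (bu * (bl^-1)%:E - 1%:E)%E.

(* The gap is beta^u_k * (beta^l_k)^-1 - 1, and both factors are nonnegative
   and non-increasing.  The upper bound beta^u_k is a running minimum of
   ratios of a support value, nonnegative because 0 lies in C, to
   <lambda, p> >= 0.  The reciprocal (beta^l_k)^-1 is the optimal value of an
   LP whose columns contain the previous optimal basis, so that basis stays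
   feasible and the value can only decrease; for k = 1 the feasible point is
   the uniform combination of the initial points, whose sum is a multiple
   of p. *)

From mathcomp Require Import all_boot all_order all_algebra.
From mathcomp Require Import all_classical all_reals all_analysis.
From mathcomp Require Import ring lra.
Import Order.TTheory GRing.Theory Num.Theory.
Import numFieldTopology.Exports numFieldNormedType.Exports.

Set Implicit Arguments.
Unset Strict Implicit.
Unset Printing Implicit Defensive.

Local Open Scope classical_set_scope.
Local Open Scope ring_scope.

Section VectorFacts.
Variables (R : realType) (l : nat).
Notation vec := 'cV[R]_l.

Lemma dotDr (u v w : vec) : dot u (v + w) = dot u v + dot u w.
Proof.
by rewrite /dot -big_split; apply: eq_bigr => i _; rewrite mxE mulrDr.
Qed.

Lemma dotNr (u v : vec) : dot u (- v) = - dot u v.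
Proof. by rewrite /dot -sumrN; apply: eq_bigr => i _; rewrite mxE mulrN. Qed.

Lemma dotNl (u v : vec) : dot (- u) v = - dot u v.
Proof. by rewrite /dot -sumrN; apply: eq_bigr => i _; rewrite mxE mulNr. Qed.

Lemma dotZl (c : R) (u v : vec) : dot (c *: u) v = c * dot u v.
Proof. by rewrite /dot mulr_sumr; apply: eq_bigr => i _; rewrite mxE mulrA. Qed.

Lemma dotr0 (u : vec) : dot u 0 = 0.
Proof. by rewrite /dot big1 // => i _; rewrite mxE mulr0. Qed.

Lemma dot_ge0 (u : vec) : 0 <= dot u u.
Proof. by rewrite /dot sumr_ge0 // => i _; rewrite -expr2 sqr_ge0. Qed.

Lemma dot_eq0 (u : vec) : (dot u u == 0) = (u == 0).
Proof.
apply/eqP/eqP => [uu0|->]; last exact: dotr0.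
apply/matrixP => i k; rewrite (ord1 k) mxE.
have sq_ge0 j : true -> 0 <= u j 0 * u j 0 by rewrite -expr2 sqr_ge0.
have /eqP := psumr_eq0P sq_ge0 uu0 (i := i) isT.
by rewrite mulf_eq0 orbb => /eqP.
Qed.

Lemma enorm_gt0 (u : vec) : u != 0 -> 0 < enorm u.
Proof. by move=> u0; rewrite sqrtr_gt0 lt_def dot_eq0 u0 dot_ge0. Qed.

Lemma infnorm_ge0 (u : vec) : 0 <= infnorm u.
Proof.
by rewrite /infnorm; elim/big_rec: _ => // i x _ x0; rewrite le_max x0 orbT.
Qed.

Lemma dim_gt0_of_neq0 (u : vec) : u != 0 -> (0 < l)%N.
Proof. by case: l u => // u; rewrite flatmx0 eqxx. Qed.

End VectorFacts.

Section SupportValue.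
Variables (R : realType) (l : nat).
Notation vec := 'cV[R]_l.

Lemma minkowski_C_supp_bound (C1 C2 : set vec) sp1 sp2 (p lam x : vec) :
  supp_point_fun C1 sp1 -> supp_point_fun C2 sp2 -> minkowski_C C1 C2 p x ->
  dot lam x <= dot lam (sp1 lam - sp2 (- lam) + p).
Proof.
move=> sp1P sp2P [a [b [C1a [C2b ->]]]].
rewrite !dotDr !dotNr -!dotNl lerD2r lerD //.
  by case: (sp1P lam) => _; apply.
by case: (sp2P (- lam)) => _; apply.
Qed.

Lemma supp_val_ge (C : set vec) (lam x : vec) (M : R) :
  (forall y, C y -> dot lam y <= M) -> C x -> dot lam x <= supp_val C lam.
Proof.
move=> CM Cx; apply: sup_upper_bound; last by exists x.
by split; [exists (dot lam x), x | exists M => _ [y Cy <-]; apply: CM].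
Qed.

Lemma supp_val_minkowski_ge0 (C1 C2 : set vec) sp1 sp2 (p1 p2 lam : vec) :
  C1 p1 -> C2 p2 -> supp_point_fun C1 sp1 -> supp_point_fun C2 sp2 ->
  0 <= supp_val (minkowski_C C1 C2 (p2 - p1)) lam.
Proof.
move=> C1p1 C2p2 sp1P sp2P; rewrite -(dotr0 lam).
apply: supp_val_ge => [y|]; first exact: minkowski_C_supp_bound.
by exists p1, p2; do 2!split=> //; rewrite addrC addrA subrK subrr.
Qed.

End SupportValue.

Section LinearProgram.
Variables (R : realType) (l : nat).
Notation vec := 'cV[R]_l.

Lemma dot_dual_sum (Z : 'M[R]_l) (p : vec) :
  dot (invmx Z^T *m const_mx 1) p = \sum_j (invmx Z *m p) j 0.
Proof.
rewrite /dot -trmx_inv.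
under eq_bigr => i _ do rewrite !mxE mulr_suml.
rewrite exchange_big /=; apply: eq_bigr => j _.
by rewrite [RHS]mxE; apply: eq_bigr => i _; rewrite !mxE mulr1.
Qed.

Lemma dual_vec_dot_ge0 (z : int -> vec) (b : 'I_l -> int) (p : vec) :
  (forall j, 0 <= (invmx (basis_mx z b) *m p) j 0) -> 0 <= dot (dual_vec z b) p.
Proof.
move=> nu_ge0; rewrite dotZl mulr_ge0 ?invr_ge0 ?infnorm_ge0 //.
by rewrite dot_dual_sum sumr_ge0.
Qed.

Lemma optimal_value_le_basic_solution (z : int -> vec) (p : vec) (S : pred int)
    (b b' : 'I_l -> int) (val : R) :
  optimal_basis z p S b val -> injective b' -> basis_mx z b' \in unitmx ->
  (forall j, S (b' j)) ->
  (forall j, 0 <= (invmx (basis_mx z b') *m p) j 0) ->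
  val <= \sum_j (invmx (basis_mx z b') *m p) j 0.
Proof.
move=> [_ [_ [_ [_ [_ opt]]]]] b'_inj b'_unit b'S nu_ge0.
set nuB := invmx _ *m p.
(* the basic solution, indexed by column labels instead of basis positions *)
pose nu m := \sum_(j | b' j == m) nuB j 0.
have nu_b' j : nu (b' j) = nuB j 0.
  by rewrite /nu (big_pred1 j) // => j' /=; apply/eqP/eqP => [/b'_inj|->].
have -> : \sum_j nuB j 0 = \sum_(m <- map b' (enum 'I_l)) nu m.
  by rewrite big_map big_enum; apply: eq_bigr => j _; rewrite nu_b'.
apply: opt.
- by rewrite map_inj_uniq ?enum_uniq.
- by apply/allP => _ /mapP [j _ ->].
- by move=> _ /mapP [j _ ->]; rewrite nu_b'.
rewrite big_map big_enum /=; apply/matrixP => i k; rewrite (ord1 k) summxE.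
rewrite -[in RHS](mulKVmx b'_unit p) -/nuB mxE.
by apply: eq_bigr => j _; rewrite nu_b' !mxE mulrC.
Qed.

Lemma optimal_basis_le (z : int -> vec) (p : vec) (S S' : pred int)
    (b b' : 'I_l -> int) (val val' : R) :
  optimal_basis z p S b val -> optimal_basis z p S' b' val' ->
  (forall j, S (b' j)) -> val <= val'.
Proof.
move=> opt [b'_inj [_ [b'_unit [nu_ge0 [-> _]]]]] b'S.
exact: optimal_value_le_basic_solution opt b'_inj b'_unit b'S nu_ge0.
Qed.

Lemma optimal_basis_value_ge0 (z : int -> vec) (p : vec) (S : pred int)
    (b : 'I_l -> int) (val : R) :
  optimal_basis z p S b val -> 0 <= val.
Proof. by move=> [_ [_ [_ [nu_ge0 [-> _]]]]]; rewrite sumr_ge0. Qed.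

End LinearProgram.

Section InitialPoints.
Variables (R : realType) (l : nat).
Notation vec := 'cV[R]_l.

Lemma init_idx_rcons : (0 < l)%N -> init_idx l = rcons (perp_idx l) 0.
Proof.
case: l => // n _; rewrite /init_idx /perp_idx.
have -> : iota 0 n.+1 = rcons (iota 0 n) n by rewrite -cats1 -addn1 iotaD.
by rewrite map_rcons; congr rcons; rewrite -addn1 PoszD; lra.
Qed.

Lemma init_idx_uniq : uniq (init_idx l).
Proof.
rewrite /init_idx map_inj_uniq ?iota_uniq // => x y /addIr/addIr/eqP.
by rewrite eqz_nat => /eqP.
Qed.

Lemma size_init_idx : size (init_idx l) = l.
Proof. by rewrite size_map size_iota. Qed.

Lemma init_combination (z : int -> vec) (p : vec) (a : R) :
  (0 < l)%N -> a != 0 -> z 0 = a *: p - \sum_(m <- perp_idx l) z m ->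
  \sum_(m <- init_idx l) a^-1 *: z m = p.
Proof.
move=> l_gt0 a0 z0.
rewrite -scaler_sumr init_idx_rcons // big_rcons /= z0 addrC subrK.
by rewrite scalerA mulVf ?scale1r.
Qed.

End InitialPoints.

Lemma rel_gap_le (R : realType) (bu bu' : \bar R) (bl bl' : R) :
  (0 <= bu)%E -> 0 <= bl^-1 -> (bu <= bu')%E -> bl^-1 <= bl'^-1 ->
  (rel_gap bu bl <= rel_gap bu' bl')%E.
Proof.
move=> bu_ge0 bl_ge0 le_bu le_bl; rewrite /rel_gap leeB //.
by apply: lee_pmul; rewrite ?lee_fin.
Qed.

Section GrowthDistanceRun.
Variables (R : realType) (l : nat).
Notation vec := 'cV[R]_l.
Variables (C1 C2 : set vec) (p1 p2 : vec) (rl : R) (sp1 sp2 : vec -> vec).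
Variables (eps K : R) (pperp : int -> vec) (N : nat) (z : int -> vec).
Variables (lam : nat -> vec) (v : nat -> R) (Mo : nat -> option nat).
Variables (Mi : nat -> pred int) (Mstar : nat -> 'I_l -> int).
Variables (betal : nat -> R) (betau : nat -> \bar R).
Hypotheses (C1p1 : C1 p1) (C2p2 : C2 p2) (p1_neq_p2 : p1 != p2).
Hypotheses (sp1P : supp_point_fun C1 sp1) (sp2P : supp_point_fun C2 sp2).
Hypothesis run : GD_run C1 C2 p1 p2 rl sp1 sp2 eps K pperp N
                        z lam v Mo Mi Mstar betal betau.
Notation p := (p2 - p1).

Lemma p_neq0 : p != 0.
Proof. by rewrite subr_eq0 eq_sym. Qed.

Lemma run_init :
  [/\ betau 0 = +oo%E, Mi 0 =i (fun m => m \in init_idx l), 0 < eps,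
      z 0 = (l%:R * eps / enorm p) *: p - \sum_(m <- perp_idx l) z m
      & betal 0 = eps / enorm p].
Proof. by case: run => -[_ [-> [? [_ [_ [? [_ [_ [-> [_ [_ [-> _]]]]]]]]]]]] _. Qed.

Lemma run_lam0 : lam 0 = (infnorm p)^-1 *: p.
Proof. by case: run => -[_ [_ [_ [_ [_ [_ [_ [_ [_ [_ [_ [_ ->]]]]]]]]]]]] _. Qed.

Lemma run_step k : (1 <= k <= N)%N ->
  [/\ v k = supp_val (minkowski_C C1 C2 p) (lam k.-1),
      betau k = Order.min (betau k.-1) (v k / dot (lam k.-1) p)%:E,
      optimal_basis z p (predU (Mi k.-1) (pred1 k%:Z)) (Mstar k) (betal k)^-1,
      forall j, Mi k (Mstar k j) &
      lam k = dual_vec z (Mstar k)].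
Proof. by case: run => _ /[apply] -[_ [-> [_ [-> [? [? [_ ->]]]]]]]. Qed.

Lemma pred_step_range k : (2 <= k <= N)%N -> (1 <= k.-1 <= N)%N.
Proof. by case: k => //= k; rewrite ltnS => /andP[-> /ltnW]. Qed.

Lemma lam_dot_ge0 j : (j <= N)%N -> 0 <= dot (lam j) p.
Proof.
case: j => [_|j jN].
  by rewrite run_lam0 dotZl mulr_ge0 ?invr_ge0 ?infnorm_ge0 ?dot_ge0.
have [_ _ [_ [_ [_ [nu_ge0 _]]]] _ ->] := run_step (k := j.+1) jN.
exact: dual_vec_dot_ge0.
Qed.

Lemma betau_ge0 j : (j <= N)%N -> (0 <= betau j)%E.
Proof.
elim: j => [_|j IH jN]; first by have [-> _ _ _ _] := run_init.
have [v_eq -> _ _ _] := run_step (k := j.+1) jN.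
rewrite le_min IH ?(ltnW jN) // lee_fin v_eq divr_ge0 ?lam_dot_ge0 ?(ltnW jN) //.
exact: supp_val_minkowski_ge0.
Qed.

Lemma betau_le_pred k : (1 <= k <= N)%N -> (betau k <= betau k.-1)%E.
Proof. by move=> /run_step [_ -> _ _ _]; rewrite ge_min lexx. Qed.

Lemma betal0_inv :
  (betal 0)^-1 = \sum_(m <- init_idx l) (l%:R * eps / enorm p)^-1.
Proof.
have [_ _ eps_gt0 _ ->] := run_init.
have l_gt0 := dim_gt0_of_neq0 p_neq0.
rewrite big_const_seq count_predT size_init_idx iter_addr_0 -mulr_natr; field.
by rewrite pnatr_eq0 -lt0n l_gt0 (gt_eqF eps_gt0) (gt_eqF (enorm_gt0 p_neq0)).
Qed.

Lemma betal_inv_ge0 j : (j <= N)%N -> 0 <= (betal j)^-1.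
Proof.
case: j => [_|j jN].
  have [_ _ eps_gt0 _ ->] := run_init.
  by rewrite invr_ge0 divr_ge0 ?(ltW eps_gt0) ?(ltW (enorm_gt0 p_neq0)).
by have [_ _ /optimal_basis_value_ge0] := run_step (k := j.+1) jN.
Qed.

Lemma betal1_inv_le : (1 <= N)%N -> (betal 1)^-1 <= (betal 0)^-1.
Proof.
move=> N_gt0; have [_ _ [_ [_ [_ [_ [_ opt]]]]] _ _] := run_step (k := 1) N_gt0.
have [_ Mi0 eps_gt0 z0 _] := run_init.
have l_gt0 := dim_gt0_of_neq0 p_neq0.
have a_gt0 : 0 < l%:R * eps / enorm p.
  by rewrite divr_gt0 ?mulr_gt0 ?ltr0n ?enorm_gt0 ?p_neq0.
rewrite betal0_inv; apply: opt.
- exact: init_idx_uniq.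
- by apply/allP => m m_init /=; rewrite -[Mi 0 m]/(m \in Mi 0) Mi0 m_init.
- by move=> m _; rewrite invr_ge0 ltW.
- by apply: init_combination; rewrite ?gt_eqF.
Qed.

Lemma betal_inv_le_pred k :
  (1 <= k <= N)%N -> (betal k)^-1 <= (betal k.-1)^-1.
Proof.
case: k => [//|[/andP[_ /betal1_inv_le //]|k kN]].
have [_ _ opt _ _] := run_step kN.
have [_ _ opt' Mi_star _] := run_step (pred_step_range (k := k.+2) kN).
by apply: optimal_basis_le opt opt' _ => j; apply/orP; left; apply: Mi_star.
Qed.

End GrowthDistanceRun.

Theorem theorem2 (R : realType) (l : nat)
    (C1 C2 : set 'cV[R]_l) (p1 p2 : 'cV[R]_l) (r1 r2 : R)
    (sp1 sp2 : 'cV[R]_l -> 'cV[R]_l) (eps K : R) (pperp : int -> 'cV[R]_l)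
    (N : nat) (z : int -> 'cV[R]_l) (lam : nat -> 'cV[R]_l) (v : nat -> R)
    (Mo : nat -> option nat) (Mi : nat -> pred int)
    (Mstar : nat -> 'I_l -> int) (betal : nat -> R) (betau : nat -> \bar R) :
  PC_set C1 -> compact_convex C2 -> C2 !=set0 ->
  interior C1 p1 -> C2 p2 -> p1 != p2 ->
  is_inradius C1 p1 r1 -> is_inradius C2 p2 r2 ->
  supp_point_fun C1 sp1 -> supp_point_fun C2 sp2 ->
  GD_run C1 C2 p1 p2 (r1 + r2) sp1 sp2 eps K pperp N
         z lam v Mo Mi Mstar betal betau ->
  forall k : nat, (1 <= k <= N)%N ->
    (rel_gap (betau k) (betal k) <= rel_gap (betau k.-1) (betal k.-1))%E.
Proof.
move=> _ _ _ /interior_subset C1p1 C2p2 p1_neq_p2 _ _ sp1P sp2P run k kN.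
have kN' : (k <= N)%N by case/andP: kN.
apply: rel_gap_le.
- exact (betau_ge0 C1p1 C2p2 sp1P sp2P run kN').
- exact (betal_inv_ge0 p1_neq_p2 run kN').
- exact (betau_le_pred run kN).
- exact (betal_inv_le_pred p1_neq_p2 run kN).
Qed.
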